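(* Let $a,b,c,p\in\mathbb{C}$ with $-c\notin\mathbb{N}\cup\{0\}$. Suppose that \[ e^{-p\arctan z}F(a,b;c;z)=\sum_{n=0}^\infty u_nz^n,\qquad |z|<1. \] Then $u_0=1$, $u_1=\frac{ab}{c}-p$, $u_2=-\frac{abp}{c}+\frac{a(a+1)b(b+1)}{2c(c+1)}+\frac{p^2}{2}$, $u_3=\frac{abp^2}{2c}-\frac{a(a+1)b(b+1)p}{2c(c+1)}+\frac{a(a+1)(a+2)b(b+1)(b+2)}{6c(c+1)(c+2)}+\frac13\left(p-\frac{p^3}{2}\right)$, \[ u_4=\frac1{24}\left(\frac{6a(a+1)b(b+1)p^2}{c(c+1)}-\frac{4ab(p^2-2)p}{c}-\frac{4(a)_3(b)_3p}{(c)_3}+\frac{(a)_4(b)_4}{(c)_4}+p^4-8p^2\right), \] and for all integers $n\ge4$, \[ u_{n+1}=\beta_0(n)u_n+\beta_1(n)u_{n-1}+\beta_2(n)u_{n-2}+\beta_3(n)u_{n-3}+\beta_4(n)u_{n-4}, \] where \[ \begin{aligned} \beta_0(n)&=\frac{(a+n)(b+n)-p(c+2n)}{(n+1)(c+n)},\qquad \beta_1(n)=\frac{p(a+b+2n-1)-2(n-1)(c+n-2)-p^2}{(n+1)(c+n)},\\ \beta_2(n)&=\frac{2(a+n-2)(b+n-2)-p(c+2n-6)+p^2}{(n+1)(c+n)},\qquad \beta_3(n)=\frac{p(a+b+2n-7)-(n-3)(c+n-4)}{(n+1)(c+n)},\\ \beta_4(n)&=\frac{(a+n-4)(b+n-4)}{(n+1)(c+n)}.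 \end{aligned} \]
   Context: $\arctan$ denotes the principal branch, analytic on the unit disc with $\arctan0=0$. For $a\in\mathbb{C}$, $(a)_n=a(a+1)\cdots(a+n-1)$ denotes the Pochhammer symbol, with $(a)_0=1$. For $a,b,c\in\mathbb{C}$ with $-c\notin\mathbb{N}\cup\{0\}$, the Gaussian hypergeometric function is $F(a,b;c;z)=\sum_{n=0}^\infty \frac{(a)_n(b)_n}{(c)_n\,n!}z^n$, $|z|<1$. *)

From Stdlib Require Import Reals Arith Factorial.
From Coquelicot Require Import Coquelicot.

Open Scope C_scope.

Definition CSeries (a : nat -> C) : C :=
  @lim C_CompleteNormedModule (filtermap (sum_n a) eventually).

Fixpoint poch (a : C) (n : nat) : C :=
  match n with
  | O => 1
  | S m => poch a m * (a + RtoC (INR m))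
  end.

Definition Cexp (w : C) : C :=
  CSeries (fun n => pow_n w n / RtoC (INR (fact n))).

(* Principal branch of arctan on the unit disc (the analytic branch with
   arctan 0 = 0): arctan z = sum_k (-1)^k z^(2k+1) / (2k+1), |z| < 1. *)
Definition Carctan (z : C) : C :=
  CSeries (fun k => RtoC ((-1) ^ k) * pow_n z (2 * k + 1) / RtoC (INR (2 * k + 1))).

Definition hypF (a b c z : C) : C :=
  CSeries (fun n => poch a n * poch b n / (poch c n * RtoC (INR (fact n))) * pow_n z n).

From Stdlib Require Import Reals Factorial Lra Lia FunctionalExtensionality.
From Coquelicot Require Import Coquelicot.
Open Scope C_scope.

(** For small real [x] both factors of the hypothesis are power
    series: F(a,b;c;x) by definition, and G(x) = exp(-p arctan x) because the
    series whose coefficients solve (n+1) g_(n+1) + (n-1) g_(n-1) = -p g_n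
    satisfies (1+x^2) G' = -p G, a linear ODE whose solution is fixed by its value
    at 0 (the complex exponential is identified with e^(Re w) (cos Im w, sin Im w)
    in the same way).  Uniqueness of power series coefficients then gives
    u = g * f (Cauchy product).  The rest is formal: with the Euler operator
    theta = z d/dz, g satisfies (1+z^2) theta g = -p z g and f satisfies
    theta (theta + c - 1) f = z (theta + a) (theta + b) f; moving theta across g
    turns the latter into a linear identity for u with polynomial coefficients,
    and its coefficient of z^(n+1) is the recurrence. *)

Lemma sum_n_Re (a : nat -> C) (n : nat) : Re (sum_n a n) = sum_n (fun k => Re (a k)) n.
Proof. induction n as [|n IH]; [now rewrite !sum_O|]. now rewrite !sum_Sn, <- IH. Qed.

Lemma sum_n_Im (a : nat -> C) (n : nat) : Im (sum_n a n) = sum_n (fun k => Im (a k)) n.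
Proof. induction n as [|n IH]; [now rewrite !sum_O|]. now rewrite !sum_Sn, <- IH. Qed.

(* Instances of generic [sum_n] and [is_series] lemmas stated at type [C], so that
   [rewrite] and [ring] see [Cplus] and [Cmult] rather than the structure operations. *)

Lemma sum_n_Cplus (u v : nat -> C) (n : nat) :
  sum_n (fun k => u k + v k) n = sum_n u n + sum_n v n.
Proof. exact (sum_n_plus u v n). Qed.

Lemma sum_n_Cmult_l (a : C) (u : nat -> C) (n : nat) :
  sum_n (fun k => a * u k) n = a * sum_n u n.
Proof. exact (sum_n_mult_l (K := C_Ring) a u n). Qed.

Lemma sum_n_C_ext (u v : nat -> C) (n : nat) :
  (forall k, (k <= n)%nat -> u k = v k) -> sum_n u n = sum_n v n.
Proof. apply sum_n_ext_loc. Qed.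

Lemma is_series_C_ext (a b : nat -> C) (l : C) :
  (forall n, a n = b n) -> is_series a l -> is_series b l.
Proof. apply is_series_ext. Qed.

Lemma is_series_Cmult_l (k : C) (a : nat -> C) (l : C) :
  is_series a l -> is_series (fun n => k * a n) (k * l).
Proof. exact (is_series_scal_l (K := C_AbsRing) (V := C_NormedModule) k a l). Qed.

Lemma is_series_Cplus (a b : nat -> C) (la lb : C) :
  is_series a la -> is_series b lb -> is_series (fun n => a n + b n) (la + lb).
Proof. exact (is_series_plus (K := C_AbsRing) (V := C_NormedModule) a b la lb). Qed.

Lemma sum_n_Sl (u : nat -> C) (n : nat) : sum_n u (S n) = u O + sum_n (fun k => u (S k)) n.
Proof.
  induction n as [|n IH].
  - rewrite sum_Sn, !sum_O. reflexivity.
  - rewrite sum_Sn, IH, sum_Sn. change (u O + sum_n (fun k => u (S k)) n + u (S (S n))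
      = u O + (sum_n (fun k => u (S k)) n + u (S (S n)))). ring.
Qed.

Lemma INR_fact_neq_0 (n : nat) : INR (fact n) <> 0%R.
Proof. apply not_0_INR, fact_neq_0. Qed.

Lemma RtoC_neq_0 (r : R) : r <> 0%R -> RtoC r <> 0.
Proof. intros H E. apply H. now injection E. Qed.

Lemma pow_n_RtoC (x : R) (n : nat) : pow_n (RtoC x) n = RtoC (x ^ n).
Proof.
  induction n as [|n IH]; [reflexivity|].
  change (RtoC x * pow_n (RtoC x) n = RtoC (x * x ^ n)). now rewrite IH, RtoC_mult.
Qed.

Lemma Cmod_pow_n (z : C) (n : nat) : Cmod (pow_n z n) = (Cmod z ^ n)%R.
Proof.
  induction n as [|n IH]; [apply Cmod_1|].
  change (Cmod (z * pow_n z n) = (Cmod z * Cmod z ^ n)%R). now rewrite Cmod_mult, IH.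
Qed.

Lemma is_series_C_iff (a : nat -> C) (l : C) :
  is_series a l <->
  is_series (fun n => Re (a n)) (Re l) /\ is_series (fun n => Im (a n)) (Im l).
Proof.
  unfold is_series. split.
  - intros H; split; apply filterlim_locally; intros eps;
      generalize (proj1 (filterlim_locally _ _) H eps); apply filter_imp;
      intros n [Hre Him].
    + now rewrite <- sum_n_Re.
    + now rewrite <- sum_n_Im.
  - intros [Hre Him]. apply filterlim_locally; intros eps.
    generalize (filter_and _ _ (proj1 (filterlim_locally _ _) Hre eps)
                               (proj1 (filterlim_locally _ _) Him eps)).
    apply filter_imp; intros n [Bre Bim].
    split; [rewrite <- sum_n_Re in Bre | rewrite <- sum_n_Im in Bim]; assumption.
Qed.

Lemma is_series_C_unique (a : nat -> C) (l l' : C) :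
  is_series a l -> is_series a l' -> l = l'.
Proof.
  exact (@filterlim_locally_unique _ C_AbsRing C_NormedModule eventually _ (sum_n a) l l').
Qed.

Lemma CSeries_unique (a : nat -> C) (l : C) : is_series a l -> CSeries a = l.
Proof.
  intros H. unfold CSeries.
  set (F := filtermap (sum_n a) eventually).
  assert (Hcv : forall eps : posreal, F (ball (@lim C_CompleteNormedModule F) eps)).
  { apply complete_cauchy.
    - apply filtermap_proper_filter, eventually_filter.
    - intros eps. exists l. exact (proj1 (filterlim_locally _ _) H eps). }
  apply (is_series_C_unique a); [|exact H].
  now apply filterlim_locally.
Qed.

Lemma is_series_RtoC (a : nat -> R) (l : R) :
  is_series a l -> is_series (fun n => RtoC (a n)) (RtoC l).
Proof.
  intros H. apply is_series_C_iff. split; [exact H|].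
  eapply filterlim_ext; [|apply filterlim_const].
  intros n. change (0%R = sum_n (fun _ => 0%R) n). rewrite sum_n_const. ring.
Qed.

Lemma CV_radius_ge_of_ex_series (a : nat -> R) (y : R) :
  ex_series (fun n => (a n * y ^ n)%R) -> Rbar_le (Rabs y) (CV_radius a).
Proof.
  intros H. destruct (filterlim_bounded (fun n => (a n * y ^ n)%R)) as [M HM].
  { exists 0%R. exact (ex_series_lim_0 _ H). }
  apply (proj1 (CV_radius_bounded a)). exists M. intros n.
  rewrite RPow_abs, Rabs_mult, Rabs_Rabsolu, <- Rabs_mult. apply HM.
Qed.

Definition within_radius (s : nat -> C) (x : R) : Prop :=
  Rbar_lt (Rabs x) (CV_radius (fun n => Re (s n))) /\
  Rbar_lt (Rabs x) (CV_radius (fun n => Im (s n))).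

Definition PSeriesC (s : nat -> C) (x : R) : C :=
  (PSeries (fun n => Re (s n)) x, PSeries (fun n => Im (s n)) x).

Section Radius.
Local Open Scope R_scope.

Lemma im_le_Cmod (z : C) : Rabs (Im z) <= Cmod z.
Proof.
  rewrite <- (Rabs_pos_eq (Cmod z)) by apply Cmod_ge_0.
  apply Rsqr_le_abs_0. rewrite !Rsqr_pow2, Cmod2_alt. nra.
Qed.

Lemma within_radius_of_bound (s : nat -> C) (b : nat -> R) (x y : R) :
  Rabs x < y -> (forall n, Cmod (s n) <= b n) -> ex_series (fun n => b n * y ^ n) ->
  within_radius s x.
Proof.
  intros Hxy Hb Hs.
  assert (Hy : 0 <= y) by (pose proof (Rabs_pos x); lra).
  assert (Hpart : forall a : nat -> R, (forall n, Rabs (a n) <= Cmod (s n)) ->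
            Rbar_lt (Rabs x) (CV_radius a)).
  { intros a Ha. apply Rbar_lt_le_trans with (Rabs y).
    { simpl. rewrite (Rabs_pos_eq y) by exact Hy. exact Hxy. }
    apply CV_radius_ge_of_ex_series.
    apply (@ex_series_le R_AbsRing R_CompleteNormedModule) with (2 := Hs); intros n.
    change norm with Rabs. rewrite Rabs_mult, <- RPow_abs, (Rabs_pos_eq y) by exact Hy.
    apply Rmult_le_compat_r; [now apply pow_le|].
    eapply Rle_trans; [apply Ha | apply Hb]. }
  split; apply Hpart; intros n; [apply re_le_Cmod | apply im_le_Cmod].
Qed.

Lemma within_radius_of_geom_bound (s : nat -> C) (M x : R) :
  0 < M -> (forall n, Cmod (s n) <= M ^ n) -> Rabs x < / M -> within_radius s x.
Proof.
  intros HM Hb Hx. set (y := (Rabs x + / M) / 2).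
  apply (within_radius_of_bound s (fun n => M ^ n) x y); [unfold y; lra | exact Hb |].
  assert (Hq : Rabs (M * y) < 1).
  { assert (M * Rabs x < 1).
    { apply Rmult_lt_reg_l with (/ M); [now apply Rinv_0_lt_compat|].
      rewrite <- Rmult_assoc, Rinv_l, Rmult_1_l, Rmult_1_r by lra. exact Hx. }
    pose proof (Rabs_pos x). pose proof (Rinv_0_lt_compat M HM).
    rewrite Rabs_pos_eq by (unfold y; nra).
    replace (M * y) with ((M * Rabs x + M * / M) / 2) by (unfold y; field; lra).
    rewrite Rinv_r by lra. lra. }
  destruct (ex_series_geom _ Hq) as [l Hl]. exists l.
  eapply is_series_ext; [|exact Hl]. intros n. apply Rpow_mult_distr.
Qed.

End Radius.

Lemma is_series_C_pow_iff (s : nat -> C) (x : R) (l : C) :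
  is_series (fun n => s n * pow_n (RtoC x) n) l <->
  is_pseries (fun n => Re (s n)) x (Re l) /\ is_pseries (fun n => Im (s n)) x (Im l).
Proof.
  rewrite is_series_C_iff, !is_pseries_R.
  assert (Hre : forall n, Re (s n * pow_n (RtoC x) n) = (Re (s n) * x ^ n)%R)
    by (intros n; rewrite pow_n_RtoC; apply re_scal_r).
  assert (Him : forall n, Im (s n * pow_n (RtoC x) n) = (Im (s n) * x ^ n)%R)
    by (intros n; rewrite pow_n_RtoC; apply im_scal_r).
  split; intros [H1 H2]; split;
    [revert H1 | revert H2 | revert H1 | revert H2]; apply is_series_ext;
    intros n; rewrite ?Hre, ?Him; reflexivity.
Qed.

Lemma is_series_PSeriesC (s : nat -> C) (x : R) :
  within_radius s x -> is_series (fun n => s n * pow_n (RtoC x) n) (PSeriesC s x).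
Proof.
  intros [Hre Him]. apply is_series_C_pow_iff.
  split; apply PSeries_correct, CV_radius_inside; assumption.
Qed.

Lemma PSeriesC_unique (s : nat -> C) (x : R) (l : C) :
  within_radius s x -> is_series (fun n => s n * pow_n (RtoC x) n) l -> PSeriesC s x = l.
Proof. intros Hs. apply is_series_C_unique, is_series_PSeriesC, Hs. Qed.

Lemma PSeriesC_0 (s : nat -> C) : PSeriesC s 0 = s O.
Proof. unfold PSeriesC. rewrite !PSeries_0. now destruct (s O). Qed.

(** * Derivatives of complex-valued functions of a real variable *)

Definition is_derive_C (f : R -> C) (x : R) (l : C) : Prop :=
  is_derive (fun t => Re (f t)) x (Re l) /\ is_derive (fun t => Im (f t)) x (Im l).

Definition PS_derive_C (s : nat -> C) (n : nat) : C := RtoC (INR (S n)) * s (S n).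

Lemma within_radius_PS_derive_C (s : nat -> C) (x : R) :
  within_radius s x -> within_radius (PS_derive_C s) x.
Proof.
  intros [Hre Him]. unfold within_radius, PS_derive_C.
  rewrite <- CV_radius_derive in Hre, Him.
  split; [rewrite (CV_radius_ext _ (PS_derive (fun n => Re (s n))))
         |rewrite (CV_radius_ext _ (PS_derive (fun n => Im (s n))))]; try assumption;
    intros n; unfold PS_derive; [apply re_scal_l | apply im_scal_l].
Qed.

Lemma is_derive_C_PSeriesC (s : nat -> C) (x : R) :
  within_radius s x -> is_derive_C (PSeriesC s) x (PSeriesC (PS_derive_C s) x).
Proof.
  intros [Hre Him]. split; simpl.
  - rewrite (PSeries_ext _ (PS_derive (fun n => Re (s n)))).
    + now apply is_derive_PSeries.
    + intros n. apply re_scal_l.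
  - rewrite (PSeries_ext _ (PS_derive (fun n => Im (s n)))).
    + now apply is_derive_PSeries.
    + intros n. apply im_scal_l.
Qed.

Section ComplexDerivative.
Local Open Scope R_scope.

Lemma is_derive_C_mult (f g : R -> C) (x : R) (df dg : C) :
  is_derive_C f x df -> is_derive_C g x dg ->
  is_derive_C (fun t => f t * g t)%C x (df * g x + f x * dg)%C.
Proof.
  intros [Hfr Hfi] [Hgr Hgi]. split.
  - apply is_derive_ext with (fun t => Re (f t) * Re (g t) - Im (f t) * Im (g t)).
    { intros t. symmetry. apply re_mult. }
    replace (Re _) with (Re df * Re (g x) + Re (f x) * Re dg
                         - (Im df * Im (g x) + Im (f x) * Im dg))
      by (rewrite re_plus, !re_mult; ring).
    apply (is_derive_minus (fun t => Re (f t) * Re (g t)) (fun t => Im (f t) * Im (g t)));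
      (apply (is_derive_mult (K := R_AbsRing)); [assumption | assumption | apply Rmult_comm]).
  - apply is_derive_ext with (fun t => Re (f t) * Im (g t) + Im (f t) * Re (g t)).
    { intros t. symmetry. apply im_mult. }
    replace (Im _) with (Re df * Im (g x) + Re (f x) * Im dg
                         + (Im df * Re (g x) + Im (f x) * Re dg))
      by (rewrite im_plus, !im_mult; ring).
    apply (is_derive_plus (fun t => Re (f t) * Im (g t)) (fun t => Im (f t) * Re (g t)));
      (apply (is_derive_mult (K := R_AbsRing)); [assumption | assumption | apply Rmult_comm]).
Qed.

Lemma is_derive_zero_const (f : R -> R) (r : R) :
  (forall t, Rabs t < r -> is_derive f t 0) -> forall t, Rabs t < r -> f t = f 0.
Proof.
  intros H t Ht.
  destruct (MVT_cor4 f (fun _ => 0) 0 (Rabs t)) with (b := t) as [c [Hc _]].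
  - intros c Hc. apply H. rewrite Rminus_0_r in Hc. lra.
  - rewrite Rminus_0_r. lra.
  - lra.
Qed.

Lemma is_derive_C_zero_const (f : R -> C) (r : R) :
  (forall t, Rabs t < r -> is_derive_C f t 0%C) -> forall t, Rabs t < r -> f t = f 0.
Proof.
  intros H t Ht. apply injective_projections;
    [apply (is_derive_zero_const (fun s => Re (f s)) r)
    |apply (is_derive_zero_const (fun s => Im (f s)) r)]; try exact Ht;
    intros s Hs; apply (H s Hs).
Qed.

Lemma is_derive_C_opp (f : R -> C) (x : R) (l : C) :
  is_derive_C f x l -> is_derive_C (fun t => - f t)%C x (- l)%C.
Proof.
  intros [Hr Hi]. split; [rewrite re_opp | rewrite im_opp].
  - apply is_derive_ext with (fun t => - Re (f t)); [intros t; symmetry; apply re_opp|].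
    exact (is_derive_opp (K := R_AbsRing) (V := R_NormedModule) _ _ _ Hr).
  - apply is_derive_ext with (fun t => - Im (f t)); [intros t; symmetry; apply im_opp|].
    exact (is_derive_opp (K := R_AbsRing) (V := R_NormedModule) _ _ _ Hi).
Qed.

Definition cexp_polar (z : C) : C :=
  (exp (Re z) * cos (Im z), exp (Re z) * sin (Im z)).

Lemma cexp_polar_opp_mul (z : C) : (cexp_polar (- z) * cexp_polar z)%C = 1%C.
Proof.
  unfold cexp_polar. rewrite re_opp, im_opp, cos_neg, sin_neg.
  assert (He : exp (- Re z) * exp (Re z) = 1) by (rewrite <- exp_plus, Rplus_opp_l; apply exp_0).
  pose proof (sin2_cos2 (Im z)) as Hsc. unfold Rsqr in Hsc.
  apply injective_projections; simpl; nra.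
Qed.

Lemma is_derive_C_cexp_polar (phi : R -> C) (x : R) (d : C) :
  is_derive_C phi x d -> is_derive_C (fun t => cexp_polar (phi t)) x (d * cexp_polar (phi x))%C.
Proof.
  assert (Hpolar : forall (fr fi : R -> R) (dr di : R),
    is_derive fr x dr -> is_derive fi x di ->
    is_derive (fun t => exp (fr t) * cos (fi t)) x
      (dr * (exp (fr x) * cos (fi x)) - di * (exp (fr x) * sin (fi x))) /\
    is_derive (fun t => exp (fr t) * sin (fi t)) x
      (dr * (exp (fr x) * sin (fi x)) + di * (exp (fr x) * cos (fi x)))).
  { intros fr fi dr di Hr Hi.
    split; auto_derive; try (repeat split; eexists; eassumption);
      change (Derive (fun t => fr t) x) with (Derive fr x);
      change (Derive (fun t => fi t) x) with (Derive fi x);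
      rewrite (is_derive_unique _ _ _ Hr), (is_derive_unique _ _ _ Hi); ring. }
  intros [Hr Hi]. destruct (Hpolar _ _ _ _ Hr Hi) as [Hc Hs].
  split; unfold cexp_polar; [rewrite re_mult | rewrite im_mult]; assumption.
Qed.

Lemma linear_ode_cexp_polar (Y phi d : R -> C) (r : R) :
  (forall t, Rabs t < r -> is_derive_C phi t (d t)) ->
  (forall t, Rabs t < r -> is_derive_C Y t (d t * Y t)%C) ->
  Y 0 = cexp_polar (phi 0) -> forall t, Rabs t < r -> Y t = cexp_polar (phi t).
Proof.
  intros Hphi HY H0 t Ht.
  (* Y exp(-phi) has derivative 0, so it keeps its value 1 at 0. *)
  assert (Hconst : forall s, Rabs s < r ->
            is_derive_C (fun t => Y t * cexp_polar (- phi t))%C s 0%C).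
  { intros s Hs.
    pose proof (is_derive_C_mult _ _ s _ _ (HY s Hs)
                  (is_derive_C_cexp_polar _ s _ (is_derive_C_opp _ _ _ (Hphi s Hs)))) as H.
    replace (RtoC 0) with (d s * Y s * cexp_polar (- phi s)
                           + Y s * (- d s * cexp_polar (- phi s)))%C by ring.
    exact H. }
  pose proof (is_derive_C_zero_const _ r Hconst t Ht) as E. cbv beta in E.
  rewrite H0, (Cmult_comm (cexp_polar (phi 0))), cexp_polar_opp_mul in E.
  rewrite <- (Cmult_1_r (Y t)), <- (cexp_polar_opp_mul (phi t)), Cmult_assoc, E.
  apply Cmult_1_l.
Qed.

End ComplexDerivative.

Lemma cexp_polar_0 : cexp_polar 0 = 1.
Proof.
  unfold cexp_polar. simpl. rewrite exp_0, cos_0, sin_0.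
  apply injective_projections; simpl; ring.
Qed.

Lemma is_derive_C_scal_RtoC (k : C) (f : R -> R) (t df : R) :
  is_derive f t df -> is_derive_C (fun s => k * RtoC (f s)) t (k * RtoC df).
Proof.
  intros Hf. split; [rewrite re_scal_r | rewrite im_scal_r].
  - apply is_derive_ext with (fun s => Re k * f s)%R; [intros s; symmetry; apply re_scal_r|].
    now apply is_derive_scal.
  - apply is_derive_ext with (fun s => Im k * f s)%R; [intros s; symmetry; apply im_scal_r|].
    now apply is_derive_scal.
Qed.

(** * The exponential *)

Definition exp_coeff (w : C) (n : nat) : C := pow_n w n / RtoC (INR (fact n)).

Lemma within_radius_exp_coeff (w : C) (x : R) : within_radius (exp_coeff w) x.
Proof.
  apply (within_radius_of_bound _ (fun n => / INR (fact n) * Cmod w ^ n)%R x (Rabs x + 1));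
    [lra | |].
  - intros n. unfold exp_coeff.
    rewrite Cmod_div by apply RtoC_neq_0, INR_fact_neq_0.
    rewrite Cmod_pow_n, Cmod_R, Rabs_pos_eq by apply pos_INR.
    right. unfold Rdiv. apply Rmult_comm.
  - eexists. eapply is_series_ext;
      [|apply (proj1 (is_pseries_R _ _ _) (is_exp_Reals (Cmod w * (Rabs x + 1))))].
    intros n. simpl. rewrite Rpow_mult_distr. ring.
Qed.

Lemma PS_derive_C_exp_coeff (w : C) (n : nat) : PS_derive_C (exp_coeff w) n = w * exp_coeff w n.
Proof.
  unfold PS_derive_C, exp_coeff. change (pow_n w (S n)) with (w * pow_n w n).
  rewrite fact_simpl, mult_INR, RtoC_mult.
  field. split; apply RtoC_neq_0; [apply INR_fact_neq_0 | apply not_0_INR; lia].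
Qed.

Lemma PSeriesC_exp_coeff (w : C) (t : R) : PSeriesC (exp_coeff w) t = cexp_polar (w * RtoC t).
Proof.
  apply (linear_ode_cexp_polar _ (fun s => w * RtoC s) (fun _ => w) (Rabs t + 1)); [| | |lra].
  - intros s _. pose proof (is_derive_C_scal_RtoC w (fun s => s) s 1 (is_derive_id s)) as H.
    now rewrite Cmult_1_r in H.
  - intros s _.
    replace (w * PSeriesC (exp_coeff w) s) with (PSeriesC (PS_derive_C (exp_coeff w)) s).
    + apply is_derive_C_PSeriesC, within_radius_exp_coeff.
    + apply PSeriesC_unique; [apply within_radius_PS_derive_C, within_radius_exp_coeff|].
      generalize (is_series_Cmult_l w _ _ (is_series_PSeriesC _ _ (within_radius_exp_coeff w s))).
      apply is_series_C_ext. intros n. rewrite PS_derive_C_exp_coeff. apply Cmult_assoc.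
  - rewrite PSeriesC_0, Cmult_0_r, cexp_polar_0. unfold exp_coeff. simpl.
    apply injective_projections; simpl; field.
Qed.

Lemma Cexp_eq_cexp_polar (w : C) : Cexp w = cexp_polar w.
Proof.
  unfold Cexp. apply CSeries_unique.
  replace (cexp_polar w) with (PSeriesC (exp_coeff w) 1)
    by now rewrite PSeriesC_exp_coeff, Cmult_1_r.
  eapply is_series_ext; [|apply is_series_PSeriesC, within_radius_exp_coeff].
  intros n. cbv beta. rewrite pow_n_RtoC, pow1, Cmult_1_r. reflexivity.
Qed.

(* For the power series S(z) with coefficients s: [zmul s], [qmul s] and [euler s] are the
   coefficients of z S(z), (1 + z^2) S(z) and z S'(z). *)

Definition seq_add (s t : nat -> C) (n : nat) : C := s n + t n.
Definition seq_scal (k : C) (s : nat -> C) (n : nat) : C := k * s n.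
Definition zmul (s : nat -> C) (n : nat) : C := match n with O => 0 | S m => s m end.
Definition qmul (s : nat -> C) : nat -> C := seq_add s (zmul (zmul s)).
Definition euler (s : nat -> C) (n : nat) : C := RtoC (INR n) * s n.

Lemma zmul_add (s t : nat -> C) : zmul (seq_add s t) = seq_add (zmul s) (zmul t).
Proof. apply functional_extensionality. intros [|n]; unfold zmul, seq_add; ring. Qed.

Lemma zmul_scal (k : C) (s : nat -> C) : zmul (seq_scal k s) = seq_scal k (zmul s).
Proof. apply functional_extensionality. intros [|n]; unfold zmul, seq_scal; ring. Qed.

Lemma euler_add (s t : nat -> C) : euler (seq_add s t) = seq_add (euler s) (euler t).
Proof. apply functional_extensionality. intros n. unfold euler, seq_add. ring. Qed.

Lemma euler_scal (k : C) (s : nat -> C) : euler (seq_scal k s) = seq_scal k (euler s).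
Proof. apply functional_extensionality. intros n. unfold euler, seq_scal. ring. Qed.

Lemma qmul_add (s t : nat -> C) : qmul (seq_add s t) = seq_add (qmul s) (qmul t).
Proof.
  unfold qmul. rewrite !zmul_add.
  apply functional_extensionality. intros n. unfold seq_add. ring.
Qed.

Lemma qmul_scal (k : C) (s : nat -> C) : qmul (seq_scal k s) = seq_scal k (qmul s).
Proof.
  unfold qmul. rewrite !zmul_scal.
  apply functional_extensionality. intros n. unfold seq_add, seq_scal. ring.
Qed.

Lemma qmul_zmul (s : nat -> C) : qmul (zmul s) = zmul (qmul s).
Proof. unfold qmul. now rewrite zmul_add. Qed.

Lemma euler_eq_zmul_PS_derive_C (s : nat -> C) : euler s = zmul (PS_derive_C s).
Proof.
  apply functional_extensionality. intros [|n]; unfold euler, PS_derive_C; cbn [zmul].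
  - rewrite INR_0. ring.
  - reflexivity.
Qed.

Lemma is_series_zmul (s : nat -> C) (x : R) (l : C) :
  is_series (fun n => s n * pow_n (RtoC x) n) l ->
  is_series (fun n => zmul s n * pow_n (RtoC x) n) (RtoC x * l).
Proof.
  intros H. apply is_series_decr_1.
  change (plus (RtoC x * l) (opp (zmul s 0 * pow_n (RtoC x) 0)))
    with (RtoC x * l - 0 * 1).
  replace (RtoC x * l - 0 * 1) with (RtoC x * l) by ring.
  generalize (is_series_Cmult_l (RtoC x) _ _ H). apply is_series_C_ext.
  intros n. change (RtoC x * (s n * pow_n (RtoC x) n) = s n * (RtoC x * pow_n (RtoC x) n)).
  ring.
Qed.

Lemma is_series_qmul (s : nat -> C) (x : R) (l : C) :
  is_series (fun n => s n * pow_n (RtoC x) n) l ->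
  is_series (fun n => qmul s n * pow_n (RtoC x) n) ((1 + RtoC x ^ 2) * l).
Proof.
  intros H.
  replace ((1 + RtoC x ^ 2) * l) with (l + RtoC x * (RtoC x * l)) by ring.
  generalize (is_series_Cplus _ _ _ _ H (is_series_zmul _ _ _ (is_series_zmul _ _ _ H))).
  apply is_series_C_ext. intros n. unfold qmul, seq_add. ring.
Qed.

(* (1 + z^2) z d/dz + p z, which satisfies twisted_euler p (g h) = (1 + z^2) g z h' when
   g = exp(-p arctan z). *)
Definition twisted_euler (p : C) (y : nat -> C) : nat -> C :=
  seq_add (qmul (euler y)) (seq_scal p (zmul y)).

Definition twisted_euler_q (p : C) (y : nat -> C) : nat -> C :=
  seq_add (twisted_euler p y) (seq_scal (-2) (zmul (zmul y))).

Lemma qmul_twisted_euler (p : C) (y : nat -> C) :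
  qmul (twisted_euler p y) = twisted_euler_q p (qmul y).
Proof.
  apply functional_extensionality. intros [|[|[|[|n]]]];
    unfold twisted_euler_q, twisted_euler, qmul, seq_add, seq_scal, euler; cbn [zmul];
    rewrite ?S_INR, ?INR_0, ?RtoC_plus; ring.
Qed.

(** * The coefficients of exp(-p arctan z) *)

Section Arctan.
Local Open Scope R_scope.

Lemma is_series_ps_atan (x : R) : -1 < x < 1 -> is_series (tg_alt (Ratan_seq x)) (ps_atan x).
Proof.
  intros Hx. apply (is_lim_seq_Reals (sum_n _)). intros eps Heps.
  destruct (Ratan_is_ps_atan eps Heps) as [N HN]. exists N. intros n Hn.
  rewrite sum_n_Reals. apply HN; lia || lra.
Qed.

Lemma atan_eq_ps_atan_disc (x : R) : -1 < x < 1 -> atan x = ps_atan x.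
Proof.
  intros Hx. destruct (Rtotal_order x 0) as [Hn|[->|Hp]].
  - rewrite <- (Ropp_involutive x), atan_opp, ps_atan_opp, atan_eq_ps_atan by lra.
    reflexivity.
  - now rewrite atan_0, ps_atan0_0.
  - apply atan_eq_ps_atan. lra.
Qed.

End Arctan.

Lemma Carctan_RtoC (x : R) : (-1 < x < 1)%R -> Carctan (RtoC x) = RtoC (atan x).
Proof.
  intros Hx. unfold Carctan. apply CSeries_unique.
  rewrite atan_eq_ps_atan_disc by exact Hx.
  generalize (is_series_RtoC _ _ (is_series_ps_atan x Hx)). apply is_series_C_ext.
  intros k. unfold tg_alt, Ratan_seq. rewrite pow_n_RtoC, <- RtoC_mult, <- RtoC_div.
  - f_equal. unfold Rdiv. ring.
  - apply not_0_INR. lia.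
Qed.

(* The recurrence is the coefficient form of (1 + z^2) G' = -p G. *)
Fixpoint expatan_coeff (p : C) (n : nat) : C :=
  match n with
  | O => 1
  | S O => - p
  | S (S m as k) => (- p * expatan_coeff p k - RtoC (INR m) * expatan_coeff p m) / RtoC (INR (S k))
  end.

Lemma expatan_coeff_rec (p : C) (m : nat) :
  RtoC (INR (S (S m))) * expatan_coeff p (S (S m)) + RtoC (INR m) * expatan_coeff p m
  = - p * expatan_coeff p (S m).
Proof.
  change (expatan_coeff p (S (S m)))
    with ((- p * expatan_coeff p (S m) - RtoC (INR m) * expatan_coeff p m) / RtoC (INR (S (S m)))).
  field. apply RtoC_neq_0, not_0_INR. lia.
Qed.

Lemma qmul_PS_derive_C_expatan_coeff (p : C) :
  qmul (PS_derive_C (expatan_coeff p)) = seq_scal (- p) (expatan_coeff p).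
Proof.
  apply functional_extensionality.
  intros [|[|n]]; unfold qmul, seq_add, seq_scal, PS_derive_C; cbn [zmul].
  - cbn [expatan_coeff]. rewrite INR_1. ring.
  - pose proof (expatan_coeff_rec p 0) as H. rewrite INR_0 in H. rewrite <- H. ring.
  - apply expatan_coeff_rec.
Qed.

Lemma qmul_euler_expatan_coeff (p : C) :
  qmul (euler (expatan_coeff p)) = seq_scal (- p) (zmul (expatan_coeff p)).
Proof.
  now rewrite euler_eq_zmul_PS_derive_C, qmul_zmul, qmul_PS_derive_C_expatan_coeff, zmul_scal.
Qed.

Lemma expatan_coeff_bound (p : C) (k : nat) : (Cmod (expatan_coeff p k) <= (Cmod p + 1) ^ k)%R.
Proof.
  set (M := (Cmod p + 1)%R).
  assert (HM : (1 <= M)%R) by (unfold M; pose proof (Cmod_ge_0 p); lra).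
  assert (Hpair : forall n, (Cmod (expatan_coeff p n) <= M ^ n)%R /\
                            (Cmod (expatan_coeff p (S n)) <= M ^ S n)%R).
  { induction n as [|n IH].
    - simpl. rewrite Cmod_1, Cmod_opp. unfold M. lra.
    - destruct IH as [H0 H1]. split; [exact H1|].
      assert (Hn2 : (0 < INR (S (S n)))%R) by (apply lt_0_INR; lia).
      apply Rmult_le_reg_l with (INR (S (S n))); [exact Hn2|].
      rewrite <- (Rabs_pos_eq (INR (S (S n)))) at 1 by lra.
      rewrite <- Cmod_R, <- Cmod_mult.
      replace (RtoC (INR (S (S n))) * expatan_coeff p (S (S n)))
        with (- p * expatan_coeff p (S n) - RtoC (INR n) * expatan_coeff p n)
        by (rewrite <- expatan_coeff_rec; ring).
      eapply Rle_trans; [apply Cmod_triangle|].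
      rewrite Cmod_opp, !Cmod_mult, Cmod_opp, Cmod_R, Rabs_pos_eq by apply pos_INR.
      assert (HMn : (1 <= M ^ n)%R) by now apply pow_R1_Rle.
      assert (HA : (Cmod p * Cmod (expatan_coeff p (S n)) <= M ^ S (S n))%R).
      { apply Rle_trans with (M * M ^ S n)%R; [|right; reflexivity].
        apply Rmult_le_compat; try apply Cmod_ge_0; [unfold M; lra | exact H1]. }
      assert (HB : (INR n * Cmod (expatan_coeff p n) <= INR n * M ^ S (S n))%R).
      { apply Rmult_le_compat_l; [apply pos_INR|].
        assert (HX : forall X, (0 <= X -> X <= M * X)%R) by (intros X HX; nra).
        apply Rle_trans with (M ^ n)%R; [exact H0|].
        apply Rle_trans with (M * M ^ n)%R; [apply HX; lra|].
        apply HX. apply Rmult_le_pos; lra. }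
      assert (0 <= M ^ S (S n))%R by (apply pow_le; lra).
      rewrite !S_INR. lra. }
  apply Hpair.
Qed.

Lemma within_radius_expatan_coeff (p : C) (x : R) :
  (Rabs x < / (Cmod p + 1))%R -> within_radius (expatan_coeff p) x.
Proof.
  apply within_radius_of_geom_bound; [pose proof (Cmod_ge_0 p); lra|].
  apply expatan_coeff_bound.
Qed.

Lemma PSeriesC_expatan_coeff (p : C) (x : R) :
  (Rabs x < / (Cmod p + 1))%R ->
  PSeriesC (expatan_coeff p) x = cexp_polar (- p * RtoC (atan x)).
Proof.
  apply (linear_ode_cexp_polar _ (fun t => - p * RtoC (atan t))
           (fun t => - p * RtoC (/ (1 + t ^ 2)))).
  - intros t _. apply is_derive_C_scal_RtoC, is_derive_Reals, derivable_pt_lim_atan.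
  - intros t Ht. pose proof (within_radius_expatan_coeff p t Ht) as Hg.
    set (D := PSeriesC (PS_derive_C (expatan_coeff p)) t).
    assert (HD : (1 + RtoC t ^ 2) * D = - p * PSeriesC (expatan_coeff p) t).
    { apply (is_series_C_unique (fun n => seq_scal (- p) (expatan_coeff p) n * pow_n (RtoC t) n)).
      - rewrite <- qmul_PS_derive_C_expatan_coeff.
        apply is_series_qmul, is_series_PSeriesC, within_radius_PS_derive_C, Hg.
      - generalize (is_series_Cmult_l (- p) _ _ (is_series_PSeriesC _ _ Hg)).
        apply is_series_C_ext. intros n. unfold seq_scal. ring. }
    replace (- p * RtoC (/ (1 + t ^ 2)) * PSeriesC (expatan_coeff p) t) with D.
    + apply is_derive_C_PSeriesC, Hg.
    + assert (Hpos : (0 < 1 + t ^ 2)%R) by (pose proof (pow2_ge_0 t); lra).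
      rewrite <- Cmult_assoc, (Cmult_comm _ (PSeriesC _ _)), Cmult_assoc, <- HD.
      rewrite RtoC_inv, RtoC_plus, RtoC_pow by lra.
      field. rewrite <- RtoC_pow, <- RtoC_plus. apply RtoC_neq_0. lra.
  - rewrite PSeriesC_0, atan_0, Cmult_0_r. symmetry. apply cexp_polar_0.
Qed.

(** * Hypergeometric coefficients *)

Lemma pos_seq_lower_bound (v : nat -> R) (N : nat) (e : R) :
  (0 < e)%R -> (forall n, 0 < v n)%R -> (forall n, (N <= n)%nat -> e <= v n)%R ->
  exists d, (0 < d)%R /\ forall n, (d <= v n)%R.
Proof.
  revert e. induction N as [|N IH]; intros e He Hv Htail.
  - exists e. split; [exact He|]. intros n. apply Htail. lia.
  - apply (IH (Rmin e (v N))); [now apply Rmin_pos | exact Hv |].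
    intros n Hn. destruct (Nat.eq_dec n N) as [->|Hne]; [apply Rmin_r|].
    eapply Rle_trans; [apply Rmin_l | apply Htail; lia].
Qed.

Lemma Cmod_add_INR_le (z : C) (n : nat) : (Cmod (z + RtoC (INR n)) <= (Cmod z + 1) * INR (S n))%R.
Proof.
  eapply Rle_trans; [apply Cmod_triangle|].
  rewrite Cmod_R, Rabs_pos_eq by apply pos_INR.
  rewrite S_INR. pose proof (pos_INR n). pose proof (Cmod_ge_0 z). nra.
Qed.

Lemma Cmod_add_INR_linear_lower_bound (c : C) :
  (forall m : nat, c + RtoC (INR m) <> 0) ->
  exists d, (0 < d)%R /\ forall n, (d * INR (S n) <= Cmod (c + RtoC (INR n)))%R.
Proof.
  intros hc. destruct (INR_unbounded (2 * Cmod c + 1)) as [N HN].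
  destruct (pos_seq_lower_bound (fun n => Cmod (c + RtoC (INR n)) / INR (S n))%R N (1 / 4)%R)
    as [d [Hd Hlow]].
  - lra.
  - intros n. apply Rdiv_lt_0_compat; [now apply Cmod_gt_0 | apply lt_0_INR; lia].
  - intros n Hn. cbv beta. apply (Rle_div_r (1 / 4)); [apply lt_0_INR; lia|].
    assert (Hle : (INR N <= INR n)%R) by now apply le_INR.
    assert (Htri : (INR n <= Cmod (c + RtoC (INR n)) + Cmod c)%R).
    { pose proof (Cmod_triangle (c + RtoC (INR n)) (- c)) as T.
      replace (c + RtoC (INR n) + - c) with (RtoC (INR n)) in T by ring.
      rewrite Cmod_opp, Cmod_R, Rabs_pos_eq in T by apply pos_INR. exact T. }
    pose proof (Cmod_ge_0 c). rewrite S_INR. lra.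
  - exists d. split; [exact Hd|]. intros n.
    specialize (Hlow n). apply (Rle_div_r d) in Hlow; [exact Hlow | apply lt_0_INR; lia].
Qed.

Section Hypergeometric.
Variables a b c : C.
Hypothesis hc : forall m : nat, c + RtoC (INR m) <> 0.

Definition hyp_coeff (n : nat) : C := poch a n * poch b n / (poch c n * RtoC (INR (fact n))).

Lemma poch_c_neq_0 (n : nat) : poch c n <> 0.
Proof. induction n as [|n IH]; [apply C1_nz | now apply Cmult_neq_0]. Qed.

Lemma hyp_coeff_0 : hyp_coeff 0 = 1.
Proof. unfold hyp_coeff. simpl. field. Qed.

Lemma hyp_coeff_S (n : nat) :
  hyp_coeff (S n) = hyp_coeff n *
    ((a + RtoC (INR n)) * (b + RtoC (INR n)) / (RtoC (INR (S n)) * (c + RtoC (INR n)))).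
Proof.
  unfold hyp_coeff. simpl poch. rewrite fact_simpl, mult_INR, RtoC_mult.
  field. repeat split; first [apply hc | apply poch_c_neq_0 | apply RtoC_neq_0;
    first [apply INR_fact_neq_0 | apply not_0_INR; lia]].
Qed.

Lemma hyp_coeff_ratio_bound : exists K, (0 < K)%R /\ forall n,
  (Cmod ((a + RtoC (INR n)) * (b + RtoC (INR n)) / (RtoC (INR (S n)) * (c + RtoC (INR n))))
   <= K)%R.
Proof.
  destruct (Cmod_add_INR_linear_lower_bound c hc) as [d [Hd Hdn]].
  set (K := ((Cmod a + 1) * (Cmod b + 1) / d)%R).
  pose proof (Cmod_ge_0 a). pose proof (Cmod_ge_0 b).
  exists K. split; [apply Rdiv_lt_0_compat; [nra | exact Hd]|]. intros n.
  assert (HS : (0 < INR (S n))%R) by (apply lt_0_INR; lia).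
  assert (Hden : RtoC (INR (S n)) * (c + RtoC (INR n)) <> 0)
    by (apply Cmult_neq_0; [apply RtoC_neq_0; lra | apply hc]).
  rewrite Cmod_div, !Cmod_mult, Cmod_R, Rabs_pos_eq by (exact Hden || lra).
  apply (Rle_div_l (Cmod (a + RtoC (INR n)) * Cmod (b + RtoC (INR n))));
    [apply Rmult_lt_0_compat; [lra | apply Cmod_gt_0, hc]|].
  apply Rle_trans with ((Cmod a + 1) * INR (S n) * ((Cmod b + 1) * INR (S n)))%R.
  - apply Rmult_le_compat; try apply Cmod_ge_0; apply Cmod_add_INR_le.
  - specialize (Hdn n). unfold K.
    replace ((Cmod a + 1) * (Cmod b + 1) / d * (INR (S n) * Cmod (c + RtoC (INR n))))%R
      with ((Cmod a + 1) * (Cmod b + 1) * INR (S n) * (Cmod (c + RtoC (INR n)) / d))%R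
      by (field; lra).
    replace ((Cmod a + 1) * INR (S n) * ((Cmod b + 1) * INR (S n)))%R
      with ((Cmod a + 1) * (Cmod b + 1) * INR (S n) * INR (S n))%R by ring.
    apply Rmult_le_compat_l; [apply Rmult_le_pos; [apply Rmult_le_pos|]; lra|].
    apply (Rle_div_r (INR (S n))); [exact Hd | lra].
Qed.

Lemma hyp_coeff_geom_bound : exists K, (0 < K)%R /\ forall n, (Cmod (hyp_coeff n) <= K ^ n)%R.
Proof.
  destruct hyp_coeff_ratio_bound as [K [HK Hratio]].
  exists K. split; [exact HK|]. intros n. induction n as [|n IH].
  - rewrite hyp_coeff_0, Cmod_1. simpl. lra.
  - rewrite hyp_coeff_S, Cmod_mult. simpl pow. rewrite Rmult_comm.
    apply Rmult_le_compat; try apply Cmod_ge_0; [apply Hratio | exact IH].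
Qed.

Lemma hypF_RtoC (x : R) : within_radius hyp_coeff x -> hypF a b c (RtoC x) = PSeriesC hyp_coeff x.
Proof. intros H. apply CSeries_unique, is_series_PSeriesC, H. Qed.

Lemma hyp_coeff_euler_equation :
  seq_add (euler (euler hyp_coeff)) (seq_scal (c - 1) (euler hyp_coeff)) =
  zmul (seq_add (seq_add (euler (euler hyp_coeff)) (seq_scal (a + b) (euler hyp_coeff)))
                (seq_scal (a * b) hyp_coeff)).
Proof.
  apply functional_extensionality. intros [|k]; unfold seq_add, seq_scal, euler; cbn [zmul].
  - rewrite INR_0. ring.
  - rewrite hyp_coeff_S, S_INR, RtoC_plus.
    field. split; [apply hc|]. rewrite <- RtoC_plus, <- S_INR. apply RtoC_neq_0, not_0_INR. lia.
Qed.

End Hypergeometric.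

(** * Cauchy products *)

Definition conv (g f : nat -> C) (n : nat) : C := sum_n (fun k => g k * f (n - k)%nat) n.

Lemma Re_conv (g f : nat -> C) (n : nat) :
  Re (conv g f n) = (PS_mult (fun k => Re (g k)) (fun k => Re (f k)) n
                     - PS_mult (fun k => Im (g k)) (fun k => Im (f k)) n)%R.
Proof.
  unfold conv, PS_mult. rewrite sum_n_Re, sum_n_Reals, <- minus_sum.
  apply sum_eq. intros k _. apply re_mult.
Qed.

Lemma Im_conv (g f : nat -> C) (n : nat) :
  Im (conv g f n) = (PS_mult (fun k => Re (g k)) (fun k => Im (f k)) n
                     + PS_mult (fun k => Im (g k)) (fun k => Re (f k)) n)%R.
Proof.
  unfold conv, PS_mult. rewrite sum_n_Im, sum_n_Reals, <- plus_sum.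
  apply sum_eq. intros k _. apply im_mult.
Qed.

Lemma is_series_conv (g f : nat -> C) (x : R) :
  within_radius g x -> within_radius f x ->
  is_series (fun n => conv g f n * pow_n (RtoC x) n) (PSeriesC g x * PSeriesC f x).
Proof.
  intros [Hgr Hgi] [Hfr Hfi].
  assert (Hmul : forall A B, Rbar_lt (Rabs x) (CV_radius A) -> Rbar_lt (Rabs x) (CV_radius B) ->
            is_pseries (PS_mult A B) x (PSeries A x * PSeries B x)%R).
  { intros A B HA HB. apply is_pseries_mult; try assumption;
      apply PSeries_correct, CV_radius_inside; assumption. }
  apply is_series_C_pow_iff. rewrite re_mult, im_mult. split.
  - generalize (is_pseries_minus _ _ _ _ _ (Hmul _ _ Hgr Hfr) (Hmul _ _ Hgi Hfi)).
    apply is_pseries_ext. intros n. now rewrite Re_conv.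
  - generalize (is_pseries_plus _ _ _ _ _ (Hmul _ _ Hgr Hfi) (Hmul _ _ Hgi Hfr)).
    apply is_pseries_ext. intros n. now rewrite Im_conv.
Qed.

Lemma PS_coeff_unique (A B : nat -> R) (r : R) :
  (0 < r)%R -> (forall x, (Rabs x < r)%R -> exists l : R, is_pseries A x l /\ is_pseries B x l) ->
  forall n, A n = B n.
Proof.
  intros Hr HAB n.
  assert (Hr2 : (Rabs (r / 2) < r)%R) by (rewrite Rabs_pos_eq; lra).
  destruct (HAB _ Hr2) as [l [HA HB]].
  assert (Hrad : forall D : nat -> R, is_pseries D (r / 2)%R l -> Rbar_lt 0 (CV_radius D)).
  { intros D HD. apply Rbar_lt_le_trans with (Rabs (r / 2)); [simpl; rewrite Rabs_pos_eq; lra|].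
    apply CV_radius_ge_of_ex_series. exists l. now apply is_pseries_R. }
  apply PSeries_ext_recip; [now apply Hrad | now apply Hrad |].
  exists (mkposreal r Hr). intros x Hx.
  change (Rabs (x - 0) < r)%R in Hx. rewrite Rminus_0_r in Hx.
  destruct (HAB x Hx) as [lx [HAx HBx]].
  now rewrite (is_pseries_unique _ _ _ HAx), (is_pseries_unique _ _ _ HBx).
Qed.

Lemma coeff_unique (s t : nat -> C) (r : R) :
  (0 < r)%R ->
  (forall x, (Rabs x < r)%R -> exists l,
     is_series (fun n => s n * pow_n (RtoC x) n) l /\
     is_series (fun n => t n * pow_n (RtoC x) n) l) ->
  forall n, s n = t n.
Proof.
  intros Hr Hst n. apply injective_projections.
  - apply (PS_coeff_unique (fun k => Re (s k)) (fun k => Re (t k)) r Hr).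
    intros x Hx. destruct (Hst x Hx) as [l [Hs Ht]].
    apply is_series_C_pow_iff in Hs, Ht. exists (Re l). tauto.
  - apply (PS_coeff_unique (fun k => Im (s k)) (fun k => Im (t k)) r Hr).
    intros x Hx. destruct (Hst x Hx) as [l [Hs Ht]].
    apply is_series_C_pow_iff in Hs, Ht. exists (Im l). tauto.
Qed.

Lemma conv_zmul_l (g f : nat -> C) : conv (zmul g) f = zmul (conv g f).
Proof.
  apply functional_extensionality. intros [|n]; unfold conv.
  - rewrite sum_O. cbn [zmul]. ring.
  - rewrite sum_n_Sl. cbn [zmul]. rewrite Cmult_0_l, Cplus_0_l. reflexivity.
Qed.

Lemma conv_zmul_r (g f : nat -> C) : conv g (zmul f) = zmul (conv g f).
Proof.
  apply functional_extensionality. intros [|n]; unfold conv.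
  - rewrite sum_O. cbn [zmul Nat.sub]. ring.
  - rewrite sum_Sn, Nat.sub_diag. cbn [zmul].
    change (sum_n (fun k => g k * zmul f (S n - k)) n + g (S n) * 0
            = sum_n (fun k => g k * f (n - k)%nat) n).
    rewrite Cmult_0_r, Cplus_0_r. apply sum_n_C_ext. intros k Hk.
    now replace (S n - k)%nat with (S (n - k)) by lia.
Qed.

Lemma conv_add_l (g1 g2 f : nat -> C) : conv (seq_add g1 g2) f = seq_add (conv g1 f) (conv g2 f).
Proof.
  apply functional_extensionality. intros n. unfold conv, seq_add.
  rewrite <- sum_n_Cplus. apply sum_n_C_ext. intros k _. ring.
Qed.

Lemma conv_add_r (g f1 f2 : nat -> C) : conv g (seq_add f1 f2) = seq_add (conv g f1) (conv g f2).
Proof.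
  apply functional_extensionality. intros n. unfold conv, seq_add.
  rewrite <- sum_n_Cplus. apply sum_n_C_ext. intros k _. ring.
Qed.

Lemma conv_scal_l (k : C) (g f : nat -> C) : conv (seq_scal k g) f = seq_scal k (conv g f).
Proof.
  apply functional_extensionality. intros n. unfold conv, seq_scal.
  rewrite <- sum_n_Cmult_l. apply sum_n_C_ext. intros j _. ring.
Qed.

Lemma conv_scal_r (k : C) (g f : nat -> C) : conv g (seq_scal k f) = seq_scal k (conv g f).
Proof.
  apply functional_extensionality. intros n. unfold conv, seq_scal.
  rewrite <- sum_n_Cmult_l. apply sum_n_C_ext. intros j _. ring.
Qed.

Lemma conv_qmul_l (g f : nat -> C) : conv (qmul g) f = qmul (conv g f).
Proof. unfold qmul. now rewrite conv_add_l, !conv_zmul_l. Qed.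

Lemma euler_conv (g f : nat -> C) :
  euler (conv g f) = seq_add (conv (euler g) f) (conv g (euler f)).
Proof.
  apply functional_extensionality. intros n. unfold conv, seq_add, euler.
  rewrite <- sum_n_Cplus, <- sum_n_Cmult_l. apply sum_n_C_ext. intros k Hk.
  rewrite <- (Nat.sub_add k n Hk) at 1. rewrite plus_INR, RtoC_plus. ring.
Qed.

Lemma twisted_euler_conv (p : C) (g h : nat -> C) :
  qmul (euler g) = seq_scal (- p) (zmul g) ->
  twisted_euler p (conv g h) = qmul (conv g (euler h)).
Proof.
  intros Hg. unfold twisted_euler.
  rewrite euler_conv, qmul_add, <- conv_qmul_l, Hg, conv_scal_l, conv_zmul_l.
  apply functional_extensionality. intros n. unfold seq_add, seq_scal. ring.
Qed.

Lemma conv_hypergeometric_identity (a b c p : C) (g f : nat -> C) :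
  qmul (euler g) = seq_scal (- p) (zmul g) ->
  seq_add (euler (euler f)) (seq_scal (c - 1) (euler f)) =
    zmul (seq_add (seq_add (euler (euler f)) (seq_scal (a + b) (euler f))) (seq_scal (a * b) f)) ->
  let W := conv g f in
  let Y1 := seq_add (twisted_euler p W) (seq_scal (c - 1) (qmul W)) in
  let Y2 := seq_add (twisted_euler p W) (seq_scal b (qmul W)) in
  twisted_euler_q p Y1 = zmul (seq_add (twisted_euler_q p Y2) (seq_scal a (qmul Y2))).
Proof.
  intros Hg Hf W Y1 Y2.
  set (h1 := seq_add (euler f) (seq_scal (c - 1) f)).
  set (h2 := seq_add (euler f) (seq_scal b f)).
  assert (Hh1 : euler h1 = zmul (seq_add (euler h2) (seq_scal a h2))).
  { unfold h1, h2. rewrite !euler_add, !euler_scal, Hf. f_equal.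
    apply functional_extensionality. intros n. unfold seq_add, seq_scal. ring. }
  assert (HY1 : qmul (conv g h1) = Y1).
  { unfold h1, Y1, W. now rewrite conv_add_r, conv_scal_r, qmul_add, qmul_scal,
      <- (twisted_euler_conv p g f Hg). }
  assert (HY2 : qmul (conv g h2) = Y2).
  { unfold h2, Y2, W. now rewrite conv_add_r, conv_scal_r, qmul_add, qmul_scal,
      <- (twisted_euler_conv p g f Hg). }
  rewrite <- HY1, <- qmul_twisted_euler, (twisted_euler_conv p g h1 Hg), Hh1,
    conv_zmul_r, !qmul_zmul. f_equal.
  rewrite conv_add_r, conv_scal_r, !qmul_add, !qmul_scal, <- (twisted_euler_conv p g h2 Hg),
    qmul_twisted_euler, HY2. reflexivity.
Qed.

(** * The recurrence *)

Lemma Cmult_sub_eq_0_reg (d x y : C) : d <> 0 -> d * x - d * y = 0 -> x = y.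
Proof.
  intros Hd H.
  replace x with (y + / d * (d * x - d * y)) by (field; exact Hd).
  rewrite H. ring.
Qed.

Lemma conv_recurrence (a b c p : C) (g f : nat -> C) :
  (forall m : nat, c + RtoC (INR m) <> 0) ->
  qmul (euler g) = seq_scal (- p) (zmul g) ->
  seq_add (euler (euler f)) (seq_scal (c - 1) (euler f)) =
    zmul (seq_add (seq_add (euler (euler f)) (seq_scal (a + b) (euler f))) (seq_scal (a * b) f)) ->
  forall n : nat, (4 <= n)%nat ->
     let W := conv g f in
     let N := RtoC (INR n) in
     let D := (N + 1) * (c + N) in
     W (S n) =
       ((a + N) * (b + N) - p * (c + 2 * N)) / D * W n
     + (p * (a + b + 2 * N - 1) - 2 * (N - 1) * (c + N - 2) - p ^ 2) / D * W (n - 1)%nat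
     + (2 * (a + N - 2) * (b + N - 2) - p * (c + 2 * N - 6) + p ^ 2) / D * W (n - 2)%nat
     + (p * (a + b + 2 * N - 7) - (N - 3) * (c + N - 4)) / D * W (n - 3)%nat
     + (a + N - 4) * (b + N - 4) / D * W (n - 4)%nat.
Proof.
  intros hc Hg Hf n Hn W N D.
  pose proof (f_equal (fun s => s (S n)) (conv_hypergeometric_identity a b c p g f Hg Hf)) as H.
  cbv zeta in H. fold W in H. clearbody W.
  assert (HN1 : N + 1 <> 0).
  { unfold N. rewrite <- RtoC_plus, <- S_INR. apply RtoC_neq_0, not_0_INR. lia. }
  assert (HcN : c + N <> 0) by apply hc.
  apply (Cmult_sub_eq_0_reg D); [now apply Cmult_neq_0|].
  unfold D, N in *. destruct n as [|[|[|[|m]]]]; try lia.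
  replace (S (S (S (S m))) - 1)%nat with (S (S (S m))) by lia.
  replace (S (S (S (S m))) - 2)%nat with (S (S m)) by lia.
  replace (S (S (S (S m))) - 3)%nat with (S m) by lia.
  replace (S (S (S (S m))) - 4)%nat with m by lia.
  cbv beta iota delta [twisted_euler_q twisted_euler qmul seq_add seq_scal euler zmul] in H.
  repeat rewrite S_INR, RtoC_plus in H. repeat rewrite S_INR, RtoC_plus in HN1.
  repeat rewrite S_INR, RtoC_plus in HcN. repeat rewrite S_INR, RtoC_plus.
  match type of H with ?L = ?R => transitivity (L - R) end.
  - field. split; assumption.
  - rewrite H. ring.
Qed.

Lemma conv_initial_values (a b c p : C) :
  (forall m : nat, c + RtoC (INR m) <> 0) ->
  let W := conv (expatan_coeff p) (hyp_coeff a b c) in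
  W 0%nat = 1 /\
  W 1%nat = a * b / c - p /\
  W 2%nat = - (a * b * p / c) + a * (a + 1) * b * (b + 1) / (2 * c * (c + 1)) + p ^ 2 / 2 /\
  W 3%nat = a * b * p ^ 2 / (2 * c) - a * (a + 1) * b * (b + 1) * p / (2 * c * (c + 1))
            + a * (a + 1) * (a + 2) * b * (b + 1) * (b + 2) / (6 * c * (c + 1) * (c + 2))
            + (1 / 3) * (p - p ^ 3 / 2) /\
  W 4%nat = (1 / 24) * (6 * a * (a + 1) * b * (b + 1) * p ^ 2 / (c * (c + 1))
                        - 4 * a * b * (p ^ 2 - 2) * p / c
                        - 4 * poch a 3 * poch b 3 * p / poch c 3
                        + poch a 4 * poch b 4 / poch c 4
                        + p ^ 4 - 8 * p ^ 2).
Proof.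
  intros hc W.
  pose proof (hc 0%nat) as hc0. pose proof (hc 1%nat) as hc1.
  pose proof (hc 2%nat) as hc2. pose proof (hc 3%nat) as hc3.
  rewrite INR_IZR_INZ in hc0, hc1, hc2, hc3. simpl in hc0, hc1, hc2, hc3.
  rewrite Cplus_0_r in hc0.
  unfold W, conv, hyp_coeff. repeat rewrite sum_Sn. rewrite !sum_O.
  simpl. repeat rewrite RtoC_plus.
  repeat match goal with |- context [plus ?x ?y] => change (plus x y) with (x + y) end.
  repeat split; field; repeat split; assumption.
Qed.

Lemma is_series_Cexp_arctan_hypF (a b c p : C) :
  (forall m : nat, c + RtoC (INR m) <> 0) ->
  exists r, (0 < r <= 1)%R /\ forall x : R, (Rabs x < r)%R ->
    is_series (fun n => conv (expatan_coeff p) (hyp_coeff a b c) n * pow_n (RtoC x) n)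
              (Cexp (- p * Carctan (RtoC x)) * hypF a b c (RtoC x)).
Proof.
  intros hc. destruct (hyp_coeff_geom_bound a b c hc) as [K [HK Hbound]].
  assert (Hp : (1 <= Cmod p + 1)%R) by (pose proof (Cmod_ge_0 p); lra).
  exists (Rmin (/ (Cmod p + 1)) (/ K)). split; [split|].
  - apply Rmin_pos; apply Rinv_0_lt_compat; lra.
  - eapply Rle_trans; [apply Rmin_l|]. rewrite <- Rinv_1. apply Rinv_le_contravar; lra.
  - intros x Hx.
    assert (Hxp : (Rabs x < / (Cmod p + 1))%R) by (eapply Rlt_le_trans; [exact Hx | apply Rmin_l]).
    assert (HxK : (Rabs x < / K)%R) by (eapply Rlt_le_trans; [exact Hx | apply Rmin_r]).
    assert (Hx1 : (-1 < x < 1)%R).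
    { assert (H1 : (Rabs x < 1)%R).
      { eapply Rlt_le_trans; [exact Hxp|]. rewrite <- Rinv_1. apply Rinv_le_contravar; lra. }
      apply Rabs_def2 in H1. lra. }
    pose proof (within_radius_of_geom_bound _ K x HK Hbound HxK) as Hf.
    rewrite Carctan_RtoC, Cexp_eq_cexp_polar, <- PSeriesC_expatan_coeff, hypF_RtoC by assumption.
    apply is_series_conv; [apply within_radius_expatan_coeff|]; assumption.
Qed.

Theorem theorem3p7 (a b c p : C) (u : nat -> C)
  (hc : forall m : nat, c <> - RtoC (INR m))
  (hu : forall z : C, Cmod z < 1 ->
        is_series (fun n => u n * pow_n z n) (Cexp (- p * Carctan z) * hypF a b c z)) :
  u 0%nat = 1 /\
  u 1%nat = a * b / c - p /\
  u 2%nat = - (a * b * p / c) + a * (a + 1) * b * (b + 1) / (2 * c * (c + 1)) + p ^ 2 / 2 /\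
  u 3%nat = a * b * p ^ 2 / (2 * c) - a * (a + 1) * b * (b + 1) * p / (2 * c * (c + 1))
            + a * (a + 1) * (a + 2) * b * (b + 1) * (b + 2) / (6 * c * (c + 1) * (c + 2))
            + (1 / 3) * (p - p ^ 3 / 2) /\
  u 4%nat = (1 / 24) * (6 * a * (a + 1) * b * (b + 1) * p ^ 2 / (c * (c + 1))
                        - 4 * a * b * (p ^ 2 - 2) * p / c
                        - 4 * poch a 3 * poch b 3 * p / poch c 3
                        + poch a 4 * poch b 4 / poch c 4
                        + p ^ 4 - 8 * p ^ 2) /\
  (forall n : nat, (4 <= n)%nat ->
     let N := RtoC (INR n) in
     let D := (N + 1) * (c + N) in
     u (S n) =
       ((a + N) * (b + N) - p * (c + 2 * N)) / D * u n
     + (p * (a + b + 2 * N - 1) - 2 * (N - 1) * (c + N - 2) - p ^ 2) / D * u (n - 1)%nat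
     + (2 * (a + N - 2) * (b + N - 2) - p * (c + 2 * N - 6) + p ^ 2) / D * u (n - 2)%nat
     + (p * (a + b + 2 * N - 7) - (N - 3) * (c + N - 4)) / D * u (n - 3)%nat
     + (a + N - 4) * (b + N - 4) / D * u (n - 4)%nat).
Proof.
  assert (hc' : forall m : nat, c + RtoC (INR m) <> 0).
  { intros m E. apply (hc m). rewrite <- (Cplus_0_l (- _)), <- E. ring. }
  assert (Hu : u = conv (expatan_coeff p) (hyp_coeff a b c)).
  { destruct (is_series_Cexp_arctan_hypF a b c p hc') as [r [[Hr Hr1] Hseries]].
    apply functional_extensionality, (coeff_unique _ _ r Hr). intros x Hx.
    eexists. split; [apply hu; rewrite Cmod_R; lra | exact (Hseries x Hx)]. }
  subst u. destruct (conv_initial_values a b c p hc') as [H0 [H1 [H2 [H3 H4]]]].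
  repeat split; try assumption.
  exact (conv_recurrence a b c p _ _ hc' (qmul_euler_expatan_coeff p)
           (hyp_coeff_euler_equation a b c hc')).
Qed.
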